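(* Assume Case 2 holds and $d>0$. Let $(A,B)=(n_{s-1},m_{s-1})$ and for $n\ge1$ put $$(A_n,B_n)=(\gamma_n-(\gamma-A)d^{n-1},\ Bd^{n-1}),\qquad (A_n^*,B_n^* )=\big((\delta^{n-1}+\delta^{n-2}B+\cdots+\delta B^{n-2}+B^{n-1})A,\ B^n\big).$$ (i) If $\delta<T_{s-1}$, then for every $n\ge1$, $(A_n,B_n)$ is the vertex of $N(Q^n)$ immediately preceding $(\gamma_n,d^n)$ (in order of increasing $x$-coordinate), the segment joining them has slope $-l_1^{-1}$, and $\delta^n$ is strictly smaller than the $y$-intercept of the line through $(\gamma_n,d^n)$ and $(A_n,B_n)$. (ii) If $\delta=T_{s-1}$, then for every $n\ge1$, $(A_n^*,B_n^* )$ is the vertex of $N(Q^n)$ immediately preceding $(\gamma_n,d^n)$, the segment joining them has slope $-l_1^{-1}$, and $\delta^n$ equals the $y$-intercept of the line through $(\gamma_n,d^n)$ and $(A_n^*,B_n^* )$.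
   Context: Let $f(z,w)=(p(z),q(z,w))$ be a holomorphic skew product germ at the origin of $\mathbb{C}^2$ with $f(0,0)=(0,0)$, where $p(z)=a_\delta z^\delta+O(z^{\delta+1})$ with $a_\delta\neq0$ and integer $\delta\ge1$, and $q(z,w)=\sum_{i+j\ge1}b_{ij}z^iw^j$ is not identically zero. For $n\ge1$ write $f^n=(p^n,Q^n)$. The Newton polygon $N(g)$ of a nonzero germ $g=\sum g_{ij}z^iw^j$ is the convex hull of $\bigcup_{g_{ij}\neq0}\{(x,y):x\ge i,\ y\ge j\}$. Let $(n_1,m_1),\dots,(n_s,m_s)$ be the vertices of $N(q)$ with $n_1<\cdots<n_s$, $m_1>\cdots>m_s$; for $1\le k\le s-1$ let $T_k$ be the $y$-intercept of the line through $(n_k,m_k)$ and $(n_{k+1},m_{k+1})$. Case 2 means: $s>1$ and $\delta\le T_{s-1}$; set $(\gamma,d)=(n_s,m_s)$ and $l_1=\frac{n_s-n_{s-1}}{m_{s-1}-m_s}$. Define $\gamma_n=\gamma(\delta^{n-1}+\delta^{n-2}d+\cdots+d^{n-1})$. *)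

From mathcomp Require Import all_boot all_order all_algebra.
From mathcomp Require Import complex.
From mathcomp Require Import reals.
Set Implicit Arguments. Unset Strict Implicit. Unset Printing Implicit Defensive.
Import Order.TTheory GRing.Theory Num.Theory.
Local Open Scope ring_scope.

Section Defs.
Variable R : realType.
Local Notation C := (R[i]).

(* A formal power series in (z,w): s i j is the coefficient of z^i w^j. *)
Definition series := nat -> nat -> C.

Definition oneS : series := fun i j => if (i == 0%N) && (j == 0%N) then 1 else 0.
Definition wS : series := fun i j => if (i == 0%N) && (j == 1%N) then 1 else 0.

Definition mulS (F G : series) : series := fun i j =>
  \sum_(a < i.+1) \sum_(b < j.+1) F a b * G (i - a)%N (j - b)%N.

Definition powS (F : series) (k : nat) : series := iter k (mulS F) oneS.

(* Formal composition G(P(z,w), R(z,w)), valid when P(0,0) = R(0,0) = 0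
   (then P^a R^b has order >= a+b, so only a+b <= i+j contribute). *)
Definition compS (G P Q : series) : series := fun i j =>
  \sum_(a < (i + j).+1) \sum_(b < (i + j).+1)
     G a b * mulS (powS P a) (powS Q b) i j.

Definition liftz (p : nat -> C) : series := fun i j => if j == 0%N then p i else 0.

(* Q^n, the second component of f^n = (p^n, Q^n), via f^(n+1) = f^n o f;
   Q^0 = w (f^0 = id). *)
Fixpoint Qiter (p : nat -> C) (q : series) (n : nat) : series :=
  match n with
  | 0%N => wS
  | n'.+1 => compS (Qiter p q n') (liftz p) q
  end.

(* Convergence (positive radius) of a power series: holomorphic germ. *)
Definition convergent1 (p : nat -> C) : Prop :=
  exists M r : R, 0 < r /\ forall i, ComplexField.Normc.normc (p i) * r ^+ i <= M.
Definition convergent2 (q : series) : Prop :=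
  exists M r : R, 0 < r /\ forall i j, ComplexField.Normc.normc (q i j) * r ^+ (i + j) <= M.

Definition quadrants (g : series) (x y : R) : Prop :=
  exists i j : nat, g i j != 0 /\ (i%:R <= x) /\ (j%:R <= y).

Definition newton (g : series) (x y : R) : Prop :=
  exists (n : nat) (lam px py : 'I_n -> R),
    (forall k, 0 <= lam k) /\ \sum_(k < n) lam k = 1 /\
    (forall k, quadrants g (px k) (py k)) /\
    x = \sum_(k < n) lam k * px k /\ y = \sum_(k < n) lam k * py k.

Definition vertex (g : series) (x y : R) : Prop :=
  newton g x y /\
  forall (x1 y1 x2 y2 t : R), newton g x1 y1 -> newton g x2 y2 ->
    0 < t -> t < 1 -> x = t * x1 + (1 - t) * x2 -> y = t * y1 + (1 - t) * y2 ->
    x1 = x /\ y1 = y.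

Definition prev_vertex (g : series) (x1 y1 x2 y2 : R) : Prop :=
  vertex g x2 y2 /\ vertex g x1 y1 /\ x1 < x2 /\
  forall x y, vertex g x y -> ~ (x1 < x /\ x < x2).

Definition last_vertex (g : series) (x2 y2 : R) : Prop :=
  vertex g x2 y2 /\ forall x y, vertex g x y -> x <= x2.

Definition intercept (x1 y1 x2 y2 : R) : R := y1 - x1 * (y2 - y1) / (x2 - x1).

End Defs.

Definition gamma_n (gamma delta d n : nat) : nat :=
  (gamma * \sum_(k < n) delta ^ (n.-1 - k) * d ^ k)%N.
Definition Astar_n (A B delta n : nat) : nat :=
  ((\sum_(k < n) delta ^ (n.-1 - k) * B ^ k) * A)%N.

(* Give the monomial z^i w^j the weight u i + v j, where (u, v) = (B - d, gamma - A) is the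
   inner normal of the last edge of N(q), of weight c = u gamma + v d.  The faces of least weight
   add up under multiplication, so in Q^(n+1) = Q^n(p, q) a term z^a w^b of Q^n contributes the
   face of p^a q^b: a copies of the point (delta, 0) plus b copies of that edge, at weight
   a u delta + b c.  If delta v < c (delta < T) only the last vertex (gamma_n, d^n) of N(Q^n),
   which has the least w-order, reaches the least weight, and the last edge of N(Q^(n+1)) is
   d^n copies of the edge of q translated by delta gamma_n.  If delta v = c, the weight of every
   term is delta times its own weight, so the whole last edge of N(Q^n) survives and its left end
   moves to (delta A_n^* + A B^n, B^(n+1)).  The endpoints of a face are consecutive vertices of
   the Newton polygon, and slope and intercept are read off the common weight. *)

From mathcomp Require Import all_boot all_order all_algebra.
From mathcomp Require Import complex reals.
From mathcomp Require Import zify ring lra.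
Set Implicit Arguments. Unset Strict Implicit. Unset Printing Implicit Defensive.
Import Order.TTheory GRing.Theory Num.Theory.
Local Open Scope ring_scope.

Section SeriesProducts.
Variable R : realType.
Implicit Types F G : series R.

Lemma big_ord2_single (N M : nat) (f : nat -> nat -> R[i]) a0 b0 :
  (a0 < N)%N -> (b0 < M)%N ->
  (forall a b, (a < N)%N -> (b < M)%N -> f a b != 0 -> a = a0 /\ b = b0) ->
  \sum_(a < N) \sum_(b < M) f a b = f a0 b0.
Proof.
move=> ha hb H.
rewrite (bigD1 (Ordinal ha)) //= (bigD1 (Ordinal hb)) //= !big1 ?addr0 //.
- move=> a ha'; apply: big1 => b _.
  have [//|/(H _ _ (ltn_ord a) (ltn_ord b)) [ea _]] := eqVneq (f a b) 0.
  by move: ha'; rewrite -val_eqE /= ea eqxx.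
- move=> b hb'; have [//|/(H _ _ ha (ltn_ord b)) [_ eb]] := eqVneq (f a0 b) 0.
  by move: hb'; rewrite -val_eqE /= eb eqxx.
Qed.

Lemma big_ord2_neq0 (N M : nat) (f : nat -> nat -> R[i]) :
  \sum_(a < N) \sum_(b < M) f a b != 0 -> exists a b, [/\ (a < N)%N, (b < M)%N & f a b != 0].
Proof.
move=> Hne; case: (boolP [exists a : 'I_N, exists b : 'I_M, f a b != 0]).
  by case/existsP => a /existsP[b hf]; exists a, b.
rewrite negb_exists => /forallP Hn; case/negP: Hne; apply/eqP.
apply: big1 => a _; apply: big1 => b _.
by move: (Hn a); rewrite negb_exists => /forallP /(_ b) /negPn /eqP.
Qed.

Lemma mulS_neq0 F G i j : mulS F G i j != 0 ->
  exists a b, [/\ (a <= i)%N, (b <= j)%N, F a b != 0 & G (i - a)%N (j - b)%N != 0].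
Proof.
case/(big_ord2_neq0 (f := fun a b => F a b * G (i - a)%N (j - b)%N)) => a [b [ha hb]].
by rewrite mulf_eq0 negb_or => /andP[hF hG]; exists a, b.
Qed.

Lemma mulS_single F G i j a0 b0 : (a0 <= i)%N -> (b0 <= j)%N ->
  (forall a b, (a <= i)%N -> (b <= j)%N -> F a b != 0 -> G (i - a)%N (j - b)%N != 0 ->
     a = a0 /\ b = b0) ->
  mulS F G i j = F a0 b0 * G (i - a0)%N (j - b0)%N.
Proof.
move=> ha hb H.
apply: (big_ord2_single (f := fun a b => F a b * G (i - a)%N (j - b)%N)) => // a b ha' hb'.
by rewrite mulf_eq0 negb_or => /andP[]; apply: H.
Qed.

Lemma compS_neq0 G P Q i j : compS G P Q i j != 0 ->
  exists a b, G a b != 0 /\ mulS (powS P a) (powS Q b) i j != 0.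
Proof.
case/(big_ord2_neq0 (f := fun a b => G a b * mulS (powS P a) (powS Q b) i j)) => a [b [_ _]].
by rewrite mulf_eq0 negb_or => /andP[hG hH]; exists a, b.
Qed.

Lemma compS_single G P Q i j a0 b0 : (a0 <= i + j)%N -> (b0 <= i + j)%N ->
  (forall a b, G a b != 0 -> mulS (powS P a) (powS Q b) i j != 0 -> a = a0 /\ b = b0) ->
  compS G P Q i j = G a0 b0 * mulS (powS P a0) (powS Q b0) i j.
Proof.
move=> ha hb H.
apply: (big_ord2_single (f := fun a b => G a b * mulS (powS P a) (powS Q b) i j)) => // a b _ _.
by rewrite mulf_eq0 negb_or => /andP[]; apply: H.
Qed.

Definition w_order_ge F (k : nat) := forall i j, F i j != 0 -> (k <= j)%N.

Lemma w_order_ge_mul F G k l :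
  w_order_ge F k -> w_order_ge G l -> w_order_ge (mulS F G) (k + l).
Proof.
move=> HF HG i j /mulS_neq0[a [b [_ hb /HF hk /HG hl]]]; lia.
Qed.

Lemma w_order_ge_pow F l k : w_order_ge F l -> w_order_ge (powS F k) (k * l).
Proof.
move=> HF; elim: k => [|k IH] i j; first by rewrite mul0n.
by rewrite mulSn; apply: w_order_ge_mul.
Qed.

Variables u v : nat.
Hypotheses (hu : (0 < u)%N) (hv : (0 < v)%N).

(* The face of N(F) supported by the weight (u, v): m is the least weight u i + v j of a monomial
   of F, and the monomials of weight m run from (x0, y0) to (x1, y1). *)
Definition face F (m x0 y0 x1 y1 : nat) : Prop :=
  [/\ forall i j, F i j != 0 -> (m <= u * i + v * j)%N,
      forall i j, F i j != 0 -> (u * i + v * j)%N = m -> (x0 <= i)%N /\ (i <= x1)%N,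
      (u * x0 + v * y0)%N = m /\ (u * x1 + v * y1)%N = m,
      F x0 y0 != 0 & F x1 y1 != 0].

Lemma face_mul F G mF xF0 yF0 xF1 yF1 mG xG0 yG0 xG1 yG1 :
  face F mF xF0 yF0 xF1 yF1 -> face G mG xG0 yG0 xG1 yG1 ->
  face (mulS F G) (mF + mG) (xF0 + xG0) (yF0 + yG0) (xF1 + xG1) (yF1 + yG1).
Proof.
move=> [F1 F2 [F3 F3'] F4 F5] [G1 G2 [G3 G3'] G4 G5].
have weightD i j a b : (a <= i)%N -> (b <= j)%N ->
    (u * i + v * j = (u * a + v * b) + (u * (i - a) + v * (j - b)))%N by nia.
have on_line i j a b : (a <= i)%N -> (b <= j)%N -> F a b != 0 -> G (i - a)%N (j - b)%N != 0 ->
    (u * i + v * j)%N = (mF + mG)%N ->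
    (u * a + v * b)%N = mF /\ (u * (i - a) + v * (j - b))%N = mG.
  by move=> ha hb /F1 hF /G1 hG; rewrite (weightD i j a b) //; lia.
split.
- move=> i j /mulS_neq0[a [b [ha hb /F1 hF /G1 hG]]].
  by rewrite (weightD i j a b) // leq_add.
- move=> i j /mulS_neq0[a [b [ha hb hF hG]]] E.
  have [/(F2 _ _ hF)[lF0 lF1] /(G2 _ _ hG)[lG0 lG1]] := on_line _ _ _ _ ha hb hF hG E; lia.
- lia.
- rewrite (mulS_single (a0 := xF0) (b0 := yF0)) ?addKn ?leq_addr ?mulf_neq0 //.
  move=> a b ha hb hF hG.
  have [wF wG] := on_line _ _ _ _ ha hb hF hG ltac:(lia).
  have [[lF0 lF1] [lG0 lG1]] := (F2 _ _ hF wF, G2 _ _ hG wG).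
  have ea : a = xF0 by lia.
  subst a; split => //; apply/eqP; rewrite -(eqn_pmul2l hv); apply/eqP; lia.
- rewrite (mulS_single (a0 := xF1) (b0 := yF1)) ?addKn ?leq_addr ?mulf_neq0 //.
  move=> a b ha hb hF hG.
  have [wF wG] := on_line _ _ _ _ ha hb hF hG ltac:(lia).
  have [[lF0 lF1] [lG0 lG1]] := (F2 _ _ hF wF, G2 _ _ hG wG).
  have ea : a = xF1 by lia.
  subst a; split => //; apply/eqP; rewrite -(eqn_pmul2l hv); apply/eqP; lia.
Qed.

Lemma face_one : face (oneS R) 0 0 0 0 0.
Proof.
split; rewrite ?muln0 ?addn0 /oneS ?eqxx ?oner_neq0 //.
by move=> i j; case: ifP => [/andP[/eqP -> /eqP ->]|]; rewrite ?eqxx.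
Qed.

Lemma face_pow F m x0 y0 x1 y1 k : face F m x0 y0 x1 y1 ->
  face (powS F k) (k * m) (k * x0) (k * y0) (k * x1) (k * y1).
Proof.
move=> HF; elim: k => [|k IH]; first by rewrite !mul0n; exact: face_one.
by rewrite !mulSn; exact: face_mul.
Qed.

Lemma face_wS : face (wS R) v 0 1 0 1.
Proof.
split; rewrite ?muln0 ?muln1 ?add0n /wS ?eqxx ?oner_neq0 //.
- move=> i j; case: ifP => [/andP[/eqP -> /eqP ->]|]; rewrite ?eqxx // => _.
  by rewrite muln0 muln1.
- by move=> i j; case: ifP => [/andP[/eqP -> /eqP ->]|]; rewrite ?eqxx.
Qed.

End SeriesProducts.

Lemma w_order_wS (R : realType) : w_order_ge (wS R) 1.
Proof. by move=> i j; rewrite /wS; case: ifP => [/andP[_ /eqP ->]|]; rewrite ?eqxx. Qed.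

Lemma gamma_nS gam del d n :
  gamma_n gam del d n.+1 = (del * gamma_n gam del d n + gam * d ^ n)%N.
Proof.
rewrite /gamma_n big_ord_recr /= subnn expn0 mul1n.
have -> : (\sum_(i < n) del ^ (n - widen_ord (leqnSn n) i) * d ^ widen_ord (leqnSn n) i
   = del * \sum_(k < n) del ^ (n.-1 - k) * d ^ k)%N.
  rewrite big_distrr /=; apply: eq_bigr => k _.
  have -> : (n - k = (n.-1 - k).+1)%N by have := ltn_ord k; lia.
  by rewrite expnS mulnA.
by rewrite mulnDr mulnCA.
Qed.

Lemma Astar_nS A B del n :
  Astar_n A B del n.+1 = (del * Astar_n A B del n + A * B ^ n)%N.
Proof.
rewrite /Astar_n big_ord_recr /= subnn expn0 mul1n.
have -> : (\sum_(i < n) del ^ (n - widen_ord (leqnSn n) i) * B ^ widen_ord (leqnSn n) i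
   = del * \sum_(k < n) del ^ (n.-1 - k) * B ^ k)%N.
  rewrite big_distrr /=; apply: eq_bigr => k _.
  have -> : (n - k = (n.-1 - k).+1)%N by have := ltn_ord k; lia.
  by rewrite expnS mulnA.
by rewrite mulnDl mulnA (mulnC (B ^ n)%N).
Qed.

Section Composition.
Variable R : realType.
Implicit Types G : series R.
Variables (u v del A B gam d : nat) (p : nat -> R[i]) (q : series R).
Hypotheses (hu : (0 < u)%N) (hv : (0 < v)%N) (hdel : (0 < del)%N) (hd : (0 < d)%N).
Hypotheses (hgam : gam = (A + v)%N) (hB : B = (d + u)%N).
Let c := (u * gam + v * d)%N.
Hypotheses (face_q : face u v q c A B gam d) (w_order_q : w_order_ge q d).
Hypothesis face_p : face u v (liftz p) (u * del) del 0 del 0.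

Let Hs a b := mulS (powS (liftz p) a) (powS q b).

Lemma face_Hs a b :
  face u v (Hs a b) (a * (u * del) + b * c) (a * del + b * A) (b * B) (a * del + b * gam) (b * d).
Proof.
have := face_mul hu hv (face_pow hu hv a face_p) (face_pow hu hv b face_q).
by rewrite !muln0 !add0n.
Qed.

Lemma w_order_Hs a b : w_order_ge (Hs a b) (b * d).
Proof.
have w_order_p : w_order_ge (liftz p) 0 by [].
have := w_order_ge_mul (w_order_ge_pow (k := a) w_order_p) (w_order_ge_pow (k := b) w_order_q).
by rewrite muln0.
Qed.

Lemma w_order_compS G y : w_order_ge G y -> w_order_ge (compS G (liftz p) q) (d * y).
Proof.
move=> YG i j /compS_neq0[a [b [/YG hy /w_order_Hs hj]]].
by rewrite mulnC; apply: leq_trans hj; rewrite leq_mul2r hy orbT.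
Qed.

(* The terms of G of least weight M determine the face of the composite; the terms (a0, b0) and
   (a1, b1) produce its two ends. *)
Lemma face_compS G M a0 b0 a1 b1 :
  (forall a b, G a b != 0 -> (M <= a * (u * del) + b * c)%N) ->
  (forall a b, G a b != 0 -> (a * (u * del) + b * c)%N = M ->
     (a0 * del + b0 * A <= a * del + b * A)%N /\ (a * del + b * gam <= a1 * del + b1 * gam)%N) ->
  (forall a b, G a b != 0 -> (a * (u * del) + b * c)%N = M ->
     (a * del + b * A)%N = (a0 * del + b0 * A)%N -> a = a0 /\ b = b0) ->
  (forall a b, G a b != 0 -> (a * (u * del) + b * c)%N = M ->
     (a * del + b * gam)%N = (a1 * del + b1 * gam)%N -> a = a1 /\ b = b1) ->
  G a0 b0 != 0 -> G a1 b1 != 0 ->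
  (a0 * (u * del) + b0 * c)%N = M -> (a1 * (u * del) + b1 * c)%N = M ->
  face u v (compS G (liftz p) q) M (del * a0 + A * b0) (B * b0) (del * a1 + gam * b1) (d * b1).
Proof.
move=> lowG lineG uniq0 uniq1 G0 G1 M0 M1.
rewrite (mulnC del a0) (mulnC A b0) (mulnC B b0) (mulnC del a1) (mulnC gam b1) (mulnC d b1).
have on_level i j a b : G a b != 0 -> Hs a b i j != 0 -> (u * i + v * j)%N = M ->
    (a * (u * del) + b * c)%N = M /\ (a * del + b * A <= i <= a * del + b * gam)%N.
  move=> hG hH E; have [H1 H2 _ _ _] := face_Hs a b.
  have hM : (a * (u * del) + b * c)%N = M by have := lowG _ _ hG; have := H1 _ _ hH; lia.
  by have [? ?] := H2 _ _ hH ltac:(lia); split => //; apply/andP.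
have [_ _ _ Hs0 _] := face_Hs a0 b0; have [_ _ _ _ Hs1] := face_Hs a1 b1.
split.
- move=> i j /compS_neq0[a [b [hG hH]]].
  have [H1 _ _ _ _] := face_Hs a b; exact: leq_trans (lowG _ _ hG) (H1 _ _ hH).
- move=> i j /compS_neq0[a [b [hG hH]]] E.
  have [hM /andP[hl hr]] := on_level _ _ _ _ hG hH E.
  by have [l r] := lineG _ _ hG hM; split; [exact: leq_trans l hl | exact: leq_trans hr r].
- have ucA : (u * A + v * B = c)%N by rewrite /c hgam hB; ring.
  by split; [rewrite -M0 -ucA | rewrite -M1 /c]; ring.
- have ha0 : (a0 <= (a0 * del + b0 * A) + b0 * B)%N by nia.
  have hb0 : (b0 <= (a0 * del + b0 * A) + b0 * B)%N by rewrite hB; nia.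
  rewrite (compS_single ha0 hb0) ?mulf_neq0 // => a b hG hH.
  have [hM /andP[hl _]] := on_level _ _ _ _ hG hH ltac:(lia).
  by apply: uniq0 => //; apply/eqP; rewrite eqn_leq hl (proj1 (lineG _ _ hG hM)).
- have ha1 : (a1 <= (a1 * del + b1 * gam) + b1 * d)%N by nia.
  have hb1 : (b1 <= (a1 * del + b1 * gam) + b1 * d)%N by nia.
  rewrite (compS_single ha1 hb1) ?mulf_neq0 // => a b hG hH.
  have [hM /andP[_ hr]] := on_level _ _ _ _ hG hH ltac:(lia).
  by apply: uniq1 => //; apply/eqP; rewrite eqn_leq hr (proj2 (lineG _ _ hG hM)).
Qed.

Lemma face_compS_dominant G x0 y0 x1 y1 : (del * v < c)%N ->
  face u v G (u * x1 + v * y1) x0 y0 x1 y1 -> w_order_ge G y1 ->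
  face u v (compS G (liftz p) q) (x1 * (u * del) + y1 * c)
    (del * x1 + A * y1) (B * y1) (del * x1 + gam * y1) (d * y1).
Proof.
move=> hK [G1 _ _ _ G5] YG.
have least a b : G a b != 0 ->
    (x1 * (u * del) + y1 * c <= a * (u * del) + b * c)%N /\
    ((a * (u * del) + b * c)%N = (x1 * (u * del) + y1 * c)%N -> a = x1 /\ b = y1).
  (* a (u del) + b c = del (u a + v b) + b (c - del v): both parts are least at (x1, y1) *)
  move=> hG; have h1 := G1 _ _ hG; have h2 := YG _ _ hG.
  have [K eK] : exists K, c = (del * v + K.+1)%N by exists (c - del * v).-1; lia.
  rewrite eK; split; first nia.
  move=> E; have eb : b = y1 by nia.
  by subst b; split => //; nia.
by apply: face_compS => // [a b /least[]|a b /least[_ E /E[-> ->]]|a b /least[_ E /E[-> ->]]|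
  a b /least[_ E /E[-> ->]]].
Qed.

Section Balanced.
Hypothesis hK : (del * v = c)%N.

Lemma weight_balanced a b : (a * (u * del) + b * c = del * (u * a + v * b))%N.
Proof. by rewrite -hK; ring. Qed.

Lemma shift_left_end a b x y : (u * a + v * b = u * x + v * y)%N -> (x <= a)%N ->
  (a * del + b * A = x * del + y * A + (a - x) * B)%N.
Proof.
move=> E hxa; have [k ek] : exists k, a = (x + k)%N by exists (a - x)%N; lia.
subst a.
have ucA : (u * A + v * B = c)%N by rewrite /c hgam hB; ring.
have e1 : (u * k + v * b = v * y)%N by nia.
apply/eqP; rewrite -(eqn_pmul2l hv); apply/eqP; rewrite addKn.
have := congr1 (muln A) e1; have := congr1 (muln k) ucA; have := congr1 (muln k) hK; nia.
Qed.

Lemma shift_right_end a b x y : (u * a + v * b = u * x + v * y)%N -> (a <= x)%N ->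
  (x * del + y * gam = a * del + b * gam + (x - a) * d)%N.
Proof.
move=> E hax; have [k ek] : exists k, x = (a + k)%N by exists (x - a)%N; lia.
subst x.
have e1 : (v * b = u * k + v * y)%N by nia.
apply/eqP; rewrite -(eqn_pmul2l hv); apply/eqP; rewrite addKn.
have := congr1 (muln gam) e1; have := congr1 (muln k) hK; rewrite /c; nia.
Qed.

Lemma face_compS_balanced G x0 y0 x1 y1 :
  face u v G (u * x1 + v * y1) x0 y0 x1 y1 ->
  face u v (compS G (liftz p) q) (del * (u * x1 + v * y1))
    (del * x0 + A * y0) (B * y0) (del * x1 + gam * y1) (d * y1).
Proof.
move=> [G1 G2 [G3 _] G4 G5].
have on_level a b : G a b != 0 -> (a * (u * del) + b * c)%N = (del * (u * x1 + v * y1))%N ->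
    (u * a + v * b = u * x1 + v * y1)%N.
  by rewrite weight_balanced => _ /eqP; rewrite eqn_pmul2l // => /eqP.
have hB0 : (0 < B)%N by rewrite hB addn_gt0 hd.
apply: face_compS; rewrite ?weight_balanced ?G3 //.
- by move=> a b /G1 h; rewrite weight_balanced leq_mul2l h orbT.
- move=> a b hG /(on_level _ _ hG) hm; have [h0 h1] := G2 _ _ hG hm.
  have := shift_left_end (etrans hm (esym G3)) h0; have := shift_right_end hm h1; lia.
- move=> a b hG /(on_level _ _ hG) hm E; have [h0 _] := G2 _ _ hG hm.
  have := shift_left_end (etrans hm (esym G3)) h0; rewrite E => E'.
  have ea : a = x0 by nia.
  by subst a; split => //; apply/eqP; rewrite -(eqn_pmul2l hv); apply/eqP; lia.
- move=> a b hG /(on_level _ _ hG) hm E; have [_ h1] := G2 _ _ hG hm.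
  have := shift_right_end hm h1; rewrite E => E'.
  have ea : a = x1 by nia.
  by subst a; split => //; apply/eqP; rewrite -(eqn_pmul2l hv); apply/eqP; lia.
Qed.

End Balanced.

Lemma Qiter_step_dominant G x0 y0 x1 y1 : (del * v < c)%N ->
  face u v G (u * x1 + v * y1) x0 y0 x1 y1 -> w_order_ge G y1 ->
  face u v (compS G (liftz p) q) (u * (del * x1 + gam * y1) + v * (d * y1))
    (del * x1 + A * y1) (B * y1) (del * x1 + gam * y1) (d * y1) /\
  w_order_ge (compS G (liftz p) q) (d * y1).
Proof.
move=> hK FG WG; split; last exact: w_order_compS.
have <- : (x1 * (u * del) + y1 * c = u * (del * x1 + gam * y1) + v * (d * y1))%N.
  by rewrite /c; ring.
exact: (face_compS_dominant hK FG WG).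
Qed.

Lemma Qiter_face_dominant n : (del * v < c)%N ->
  face u v (Qiter p q n.+1) (u * gamma_n gam del d n.+1 + v * d ^ n.+1)
    (del * gamma_n gam del d n + A * d ^ n) (B * d ^ n) (gamma_n gam del d n.+1) (d ^ n.+1) /\
  w_order_ge (Qiter p q n.+1) (d ^ n.+1).
Proof.
move=> hK; rewrite gamma_nS expnS; elim: n => [|n [IHf IHw]].
  have F0 : face u v (wS R) (u * 0 + v * 1) 0 1 0 1 by rewrite muln0 muln1; exact: face_wS.
  by rewrite /gamma_n big_ord0 muln0 expn0; exact: Qiter_step_dominant hK F0 (@w_order_wS R).
by move: IHf IHw; rewrite -gamma_nS -expnS => IHf IHw; exact: Qiter_step_dominant hK IHf IHw.
Qed.

Lemma Qiter_face_balanced n : (del * v = c)%N ->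
  face u v (Qiter p q n) (u * gamma_n gam del d n + v * d ^ n)
    (Astar_n A B del n) (B ^ n) (gamma_n gam del d n) (d ^ n).
Proof.
move=> hK; elim: n => [|n IH].
  by rewrite /gamma_n /Astar_n !big_ord0 !muln0 mul0n !expn0 muln1; exact: face_wS.
have -> : (u * gamma_n gam del d n.+1 + v * d ^ n.+1
           = del * (u * gamma_n gam del d n + v * d ^ n))%N.
  by rewrite gamma_nS expnS /c in hK *; nia.
by rewrite gamma_nS Astar_nS !expnS; exact: face_compS_balanced.
Qed.

End Composition.

Section NewtonPolygon.
Variable R : realType.
Implicit Types g : series R.

Lemma sumr_affine n (lam f h : 'I_n -> R) a b c :
  \sum_(k < n) lam k * (a * f k + b * h k + c) =
  a * (\sum_(k < n) lam k * f k) + b * (\sum_(k < n) lam k * h k) + c * \sum_(k < n) lam k.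
Proof. rewrite !mulr_sumr -!big_split /=; apply: eq_bigr => k _; ring. Qed.

Lemma quadrants_up g x y x' y' : quadrants g x y -> x <= x' -> y <= y' -> quadrants g x' y'.
Proof.
move=> [i [j [h1 [h2 h3]]]] hx hy; exists i, j.
by split => //; split; [exact: le_trans hx | exact: le_trans hy].
Qed.

Lemma quadrants_newton g x y : quadrants g x y -> newton g x y.
Proof.
move=> H; exists 1%N, (fun _ => 1), (fun _ => x), (fun _ => y).
by rewrite !big_ord1 !mul1r; split => //; split.
Qed.

Lemma newton_segment g x1 y1 x2 y2 t : quadrants g x1 y1 -> quadrants g x2 y2 -> 0 <= t <= 1 ->
  newton g (t * x1 + (1 - t) * x2) (t * y1 + (1 - t) * y2).
Proof.
move=> H1 H2 /andP[t0 t1].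
exists 2%N, (fun k : 'I_2 => if k == ord0 then t else 1 - t),
  (fun k : 'I_2 => if k == ord0 then x1 else x2), (fun k : 'I_2 => if k == ord0 then y1 else y2).
rewrite !big_ord_recr !big_ord0 /= !add0r.
split; first by move=> k; case: ifP => _ //; rewrite subr_ge0.
split; first by rewrite addrC subrK.
split; first by move=> k; case: ifP.
by [].
Qed.

Lemma quadrants_weight_ge g (al be m x y : R) : 0 <= al -> 0 <= be ->
  (forall i j : nat, g i j != 0 -> m <= al * i%:R + be * j%:R) ->
  quadrants g x y -> m <= al * x + be * y.
Proof.
move=> ha hb H [i [j [h1 [h2 h3]]]]; have := H _ _ h1.
have : al * i%:R <= al * x by rewrite ler_wpM2l.
have : be * j%:R <= be * y by rewrite ler_wpM2l.
lra.
Qed.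

Lemma newton_weight_ge g (al be m x y : R) : 0 <= al -> 0 <= be ->
  (forall i j : nat, g i j != 0 -> m <= al * i%:R + be * j%:R) ->
  newton g x y -> m <= al * x + be * y.
Proof.
move=> ha hb H [n [lam [px [py [Hl [Hs [Hq [-> ->]]]]]]]].
have E := sumr_affine lam px py al be (- m).
rewrite Hs mulr1 in E.
have : 0 <= \sum_(k < n) lam k * (al * px k + be * py k + - m).
  apply: sumr_ge0 => k _; apply: mulr_ge0 => //; rewrite subr_ge0.
  exact: quadrants_weight_ge (Hq k).
lra.
Qed.

Lemma newton_on_line_ge g (al be m s lo x y : R) : 0 <= al -> 0 <= be ->
  (forall i j : nat, g i j != 0 -> m <= al * i%:R + be * j%:R) ->
  (forall px py, quadrants g px py -> al * px + be * py = m -> lo <= s * px) ->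
  newton g x y -> al * x + be * y = m -> lo <= s * x.
Proof.
move=> ha hb H Hp [n [lam [px [py [Hl [Hs [Hq [-> ->]]]]]]]] Heq.
have E := sumr_affine lam px py al be (- m).
rewrite Hs mulr1 Heq subrr in E.
(* every point carrying positive weight lies on the line as well *)
have Z : forall k, lam k * (al * px k + be * py k + - m) = 0.
  move=> k; apply: (psumr_eq0P (P := predT)
    (F := fun k => lam k * (al * px k + be * py k + - m))) => //.
  move=> k' _; apply: mulr_ge0 => //; rewrite subr_ge0; exact: quadrants_weight_ge (Hq k').
have E2 := sumr_affine lam px (fun _ => 0) s 0 (- lo).
rewrite Hs mulr1 in E2.
have : 0 <= \sum_(k < n) lam k * (s * px k + 0 * 0 + - lo).
  apply: sumr_ge0 => k _.
  have [->|hl] := eqVneq (lam k) 0; first by rewrite mul0r.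
  apply: mulr_ge0 => //; rewrite subr_ge0 mul0r addr0; apply: Hp; first exact: Hq.
  by move: (Z k) => /eqP; rewrite mulf_eq0 (negbTE hl) /= subr_eq0 => /eqP.
rewrite E2 mul0r addr0 => h; lra.
Qed.

Lemma convex_min_eq (t a1 a2 m : R) : 0 < t -> t < 1 -> m <= a1 -> m <= a2 ->
  m = t * a1 + (1 - t) * a2 -> a1 = m /\ a2 = m.
Proof. move=> *; split; nra. Qed.

Lemma vertex_of_supporting_line g (al be m s : R) (x0 y0 : nat) : 0 <= al -> 0 < be -> s != 0 ->
  (forall i j : nat, g i j != 0 -> m <= al * i%:R + be * j%:R) ->
  (forall px py, quadrants g px py -> al * px + be * py = m -> s * x0%:R <= s * px) ->
  g x0 y0 != 0 -> al * x0%:R + be * y0%:R = m -> vertex g x0%:R y0%:R.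
Proof.
move=> ha hb hs H Hp hg hm; split.
  by apply: quadrants_newton; exists x0, y0.
move=> x1 y1 x2 y2 t N1 N2 t0 t1 ex ey.
have hb' : 0 <= be by exact: ltW.
have L1 := newton_weight_ge ha hb' H N1; have L2 := newton_weight_ge ha hb' H N2.
have [E1 E2] : al * x1 + be * y1 = m /\ al * x2 + be * y2 = m.
  apply: (convex_min_eq t0 t1) => //; rewrite -hm ex ey; ring.
have S1 := newton_on_line_ge ha hb' H Hp N1 E1; have S2 := newton_on_line_ge ha hb' H Hp N2 E2.
have [F1 _] : s * x1 = s * x0%:R /\ s * x2 = s * x0%:R.
  apply: (convex_min_eq t0 t1) => //; rewrite ex; ring.
have ex1 : x1 = x0%:R.
  by apply/eqP; rewrite -subr_eq0; move/eqP: F1; rewrite -subr_eq0 -mulrBr mulf_eq0 (negbTE hs).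
split => //; subst x1.
have : be * (y1 - y0%:R) = 0 by rewrite mulrBr; lra.
by move/eqP; rewrite mulf_eq0 (negbTE (lt0r_neq0 hb)) subr_eq0 => /eqP.
Qed.

Lemma vertex_not_above g (s1 s2 w1 w2 t e1 e2 : R) :
  quadrants g s1 s2 -> quadrants g w1 w2 -> 0 <= t <= 1 -> 0 <= e1 -> 0 <= e2 -> 0 < e1 + e2 ->
  ~ vertex g (t * s1 + (1 - t) * w1 + e1) (t * s2 + (1 - t) * w2 + e2).
Proof.
move=> Hs Hw ht he1 he2 he [_ V].
(* the point is the midpoint of its translates by -e/2 and e/2, which both lie in N(g) *)
have Q1 : forall h, 0 <= h ->
    newton g (t * s1 + (1 - t) * w1 + h * e1) (t * s2 + (1 - t) * w2 + h * e2).
  move=> h hh.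
  have := newton_segment (quadrants_up Hs (_ : s1 <= s1 + h * e1) (_ : s2 <= s2 + h * e2))
                  (quadrants_up Hw (_ : w1 <= w1 + h * e1) (_ : w2 <= w2 + h * e2)) ht.
  have -> : t * (s1 + h * e1) + (1 - t) * (w1 + h * e1) = t * s1 + (1 - t) * w1 + h * e1 by ring.
  have -> : t * (s2 + h * e2) + (1 - t) * (w2 + h * e2) = t * s2 + (1 - t) * w2 + h * e2 by ring.
  by apply; rewrite lerDl mulr_ge0.
have h1 : (0 : R) <= 1/2 by lra.
have h3 : (0 : R) <= 3/2 by lra.
have [E1 E2] := V _ _ _ _ (1/2) (Q1 _ h1) (Q1 _ h3) ltac:(lra) ltac:(lra)
  ltac:(by field) ltac:(by field).
lra.
Qed.

Lemma support_quadrants g (i j : nat) : g i j != 0 -> quadrants g i%:R j%:R.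
Proof. by move=> h; exists i, j. Qed.

Lemma vertex_not_northeast g (s1 s2 x y : R) : quadrants g s1 s2 ->
  s1 <= x -> s2 <= y -> s1 < x \/ s2 < y -> ~ vertex g x y.
Proof.
move=> Q hx hy hxy.
have := vertex_not_above Q Q (_ : 0 <= 1 <= 1) (_ : 0 <= x - s1) (_ : 0 <= y - s2).
have -> : 1 * s1 + (1 - 1) * s1 + (x - s1) = x by ring.
have -> : 1 * s2 + (1 - 1) * s2 + (y - s2) = y by ring.
by apply; rewrite ?ler01 ?lexx ?subr_ge0 //; lra.
Qed.

Lemma sum_drop n (lam f : 'I_n -> R) k :
  \sum_(l < n) (if l == k then 0 else lam l) * f l = \sum_(l < n) lam l * f l - lam k * f k.
Proof.
rewrite (bigD1 k) //= eqxx mul0r add0r [in RHS](bigD1 k) //= addrAC subrr add0r.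
by apply: eq_bigr => l /negbTE ->.
Qed.

Lemma vertex_convex_comb g n (lam px py : 'I_n -> R) k :
  (forall l, 0 <= lam l) -> \sum_(l < n) lam l = 1 -> (forall l, quadrants g (px l) (py l)) ->
  vertex g (\sum_(l < n) lam l * px l) (\sum_(l < n) lam l * py l) -> 0 < lam k ->
  px k = \sum_(l < n) lam l * px l /\ py k = \sum_(l < n) lam l * py l.
Proof.
set x := \sum_(l < n) lam l * px l; set y := \sum_(l < n) lam l * py l => Hl Hs Hq [_ V] hk.
have : lam k <= 1 by rewrite -Hs (bigD1 k) //= lerDl sumr_ge0.
rewrite le_eqVlt => /orP[/eqP eq1|lt1].
  have Z l : l != k -> lam l = 0.
    have E : \sum_(l < n | l != k) lam l = 0 by move: Hs; rewrite (bigD1 k) //= eq1 => H; lra.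
    exact: (psumr_eq0P (fun l _ => Hl l) E).
  have S (f : 'I_n -> R) : \sum_(l < n) lam l * f l = f k.
    by rewrite (bigD1 k) //= eq1 mul1r big1 ?addr0 // => l /Z ->; rewrite mul0r.
  by rewrite /x /y !S.
(* (x, y) is a proper convex combination of (px k, py k) and of the point obtained by
   renormalising the other weights *)
pose mu l := (if l == k then 0 else lam l) / (1 - lam k).
have h1k : 0 < 1 - lam k by lra.
have Emu (f : 'I_n -> R) :
    \sum_(l < n) mu l * f l = (\sum_(l < n) lam l * f l - lam k * f k) / (1 - lam k).
  by rewrite -sum_drop mulr_suml; apply: eq_bigr => l _; rewrite /mu; field; lra.
have Nmu : newton g (\sum_(l < n) mu l * px l) (\sum_(l < n) mu l * py l).
  exists n, mu, px, py; split.
    by move=> l; rewrite /mu; apply: divr_ge0; [case: ifP | lra].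
  split; last by split.
  have := Emu (fun _ => 1).
  rewrite (eq_bigr mu (fun l _ => mulr1 (mu l))) (eq_bigr lam (fun l _ => mulr1 (lam l))).
  by rewrite Hs mulr1 divff // lt0r_neq0.
rewrite !Emu -/x -/y in Nmu.
have [] := V _ _ _ _ (lam k) (quadrants_newton (Hq k)) Nmu hk lt1; try by field; lra.
by move=> -> ->.
Qed.

Lemma vertex_support g x y : vertex g x y -> exists i j : nat, g i j != 0 /\ x = i%:R /\ y = j%:R.
Proof.
move=> V; have [[n [lam [px [py [Hl [Hs [Hq [ex ey]]]]]]]] _] := V.
have [k hk] : exists k, 0 < lam k.
  case: (boolP [exists k, 0 < lam k]) => [/existsP [k hk]|Hn]; first by exists k.
  suff : \sum_(k < n) lam k <= 0 by rewrite Hs; lra.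
  apply: sumr_le0 => k _; rewrite leNgt.
  by move: Hn; rewrite negb_exists => /forallP /(_ k).
have [] := vertex_convex_comb Hl Hs Hq (_ : vertex g _ _) hk; first by rewrite -ex -ey.
rewrite -ex -ey; have [i [j [hg [hi hj]]]] := Hq k => Px Py.
exists i, j; split => //.
case: (boolP ((x == i%:R) && (y == j%:R))) => [/andP [/eqP -> /eqP ->] //|Hn].
exfalso; apply: (vertex_not_northeast (support_quadrants hg) _ _ _ V); rewrite -?Px -?Py //.
by move: Hn; rewrite negb_and -Px -Py !lt_neqAle hi hj !andbT => /orP[]; [left|right];
  rewrite eq_sym.
Qed.

Section SupportingLine.
Variables (g : series R) (u v m : R) (x0 y0 x1 y1 : nat).
Hypotheses (hu : 0 < u) (hv : 0 < v)
  (Hlb : forall i j : nat, g i j != 0 -> m <= u * i%:R + v * j%:R)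
  (Hline : forall i j : nat, g i j != 0 -> u * i%:R + v * j%:R = m ->
     ((x0%:R : R) <= i%:R) && (i%:R <= (x1%:R : R)))
  (g0 : g x0 y0 != 0) (g1 : g x1 y1 != 0)
  (e0 : u * x0%:R + v * y0%:R = m) (e1 : u * x1%:R + v * y1%:R = m)
  (lt01 : (x0%:R : R) < x1%:R).

Lemma quadrants_on_line px py : quadrants g px py -> u * px + v * py = m ->
  x0%:R <= px /\ px <= x1%:R.
Proof.
move=> [i [j [hg [hi hj]]]] E; have := Hlb hg.
move=> h.
have : u * i%:R <= u * px by rewrite ler_wpM2l // ltW.
have : v * j%:R <= v * py by rewrite ler_wpM2l // ltW.
move=> h1 h2; have Ei : u * i%:R + v * j%:R = m by lra.
have ha : 0 <= u * (px - i%:R) by rewrite mulr_ge0 ?subr_ge0 // ltW.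
have hb : 0 <= v * (py - j%:R) by rewrite mulr_ge0 ?subr_ge0 // ltW.
have hab : u * (px - i%:R) + v * (py - j%:R) = 0 by rewrite !mulrBr; lra.
have : u * (px - i%:R) = 0 by lra.
move/eqP; rewrite mulf_eq0 (negbTE (lt0r_neq0 hu)) subr_eq0 => /eqP Epx.
by have /andP[] := Hline hg Ei; rewrite Epx.
Qed.

Lemma vertex_left_end : vertex g x0%:R y0%:R.
Proof.
apply: (@vertex_of_supporting_line g u v m 1) => //; [exact: ltW | exact: oner_neq0 | ].
move=> px py Q E; rewrite !mul1r; exact: (proj1 (quadrants_on_line Q E)).
Qed.

Lemma vertex_right_end : vertex g x1%:R y1%:R.
Proof.
apply: (@vertex_of_supporting_line g u v m (-1)) => //;
  [exact: ltW | by rewrite oppr_eq0 oner_neq0 | ].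
move=> px py Q E; rewrite !mulN1r lerN2; exact: (proj2 (quadrants_on_line Q E)).
Qed.

Lemma no_vertex_between x y : vertex g x y -> x0%:R < x -> x < x1%:R -> False.
Proof.
move=> V h0 h1.
have N := proj1 V.
have L := newton_weight_ge (ltW hu) (ltW hv) Hlb N.
pose t := (x1%:R - x) / (x1%:R - x0%:R).
have t0 : 0 < t by apply: divr_gt0; lra.
have t1 : t < 1 by rewrite ltr_pdivrMr; lra.
have ex : x = t * x0%:R + (1 - t) * x1%:R by rewrite /t; field; lra.
pose ly := t * y0%:R + (1 - t) * y1%:R.
have Ely : u * x + v * ly = m by rewrite ex /ly; have := e0; have := e1; nra.
have Q0 : quadrants g x0%:R y0%:R by exists x0, y0.
have Q1 : quadrants g x1%:R y1%:R by exists x1, y1.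
have [hy|hy] : ly < y \/ ly = y.
  have : ly <= y.
    have : 0 <= v * (y - ly) by rewrite mulrBr; lra.
    by rewrite pmulr_rge0 // subr_ge0.
  by rewrite le_eqVlt => /orP [/eqP ->|->]; [right|left].
- apply: (@vertex_not_above g x0%:R y0%:R x1%:R y1%:R t 0 (y - ly) Q0 Q1).
  + apply/andP; split; lra.
  + exact: lexx.
  + lra.
  + lra.
  + have -> : t * x0%:R + (1 - t) * x1%:R + 0 = x by rewrite addr0.
    have -> : t * y0%:R + (1 - t) * y1%:R + (y - ly) = y by rewrite /ly; ring.
    exact: V.
- have [E _] := (proj2 V) _ _ _ _ t (quadrants_newton Q0) (quadrants_newton Q1) t0 t1 ex (esym hy).
  lra.
Qed.

Lemma prev_vertex_of_supporting_line : prev_vertex g x0%:R y0%:R x1%:R y1%:R.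
Proof.
split; first exact: vertex_right_end.
split; first exact: vertex_left_end.
split => // x y V [h0 h1]; exact: (no_vertex_between V h0 h1).
Qed.

End SupportingLine.

Lemma vertex_not_above_segment g (U V Phi sx sy wx wy vx vy t : R) :
  quadrants g sx sy -> quadrants g wx wy -> 0 < t -> t <= 1 -> 0 < V ->
  vx = t * sx + (1 - t) * wx -> U * sx + V * sy < Phi -> U * wx + V * wy = Phi ->
  U * vx + V * vy = Phi -> ~ vertex g vx vy.
Proof.
move=> Qs Qw t0 t1 hV ex hs hw hv.
pose ly := t * sy + (1 - t) * wy.
have hly : ly < vy.
  have E : U * vx + V * ly = t * (U * sx + V * sy) + (1 - t) * (U * wx + V * wy).
    by rewrite ex /ly; ring.
  have Hlt : t * (U * sx + V * sy) < t * Phi by rewrite ltr_pM2l.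
  rewrite hw in E.
  have : 0 < V * (vy - ly) by rewrite mulrBr; lra.
  by rewrite pmulr_rgt0 // subr_gt0.
have := @vertex_not_above g sx sy wx wy t 0 (vy - ly) Qs Qw.
rewrite addr0 -ex.
have -> : t * sy + (1 - t) * wy + (vy - ly) = vy by rewrite /ly; ring.
apply; [apply/andP; split; lra | exact: lexx | lra | lra].
Qed.

Lemma vertex_on_segment g (U V Phi sx sy wx wy vx vy t : R) :
  newton g sx sy -> newton g wx wy -> 0 < t -> t < 1 -> 0 < V ->
  vx = t * sx + (1 - t) * wx -> U * sx + V * sy = Phi -> U * wx + V * wy = Phi ->
  U * vx + V * vy = Phi -> vertex g vx vy -> sx = vx.
Proof.
move=> Ns Nw t0 t1 hV ex hs hw hv [_ Vv].
have ey : vy = t * sy + (1 - t) * wy.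
  have : V * (vy - (t * sy + (1 - t) * wy)) = 0.
    rewrite mulrBr; move: hv; rewrite ex => hv; nra.
  by move/eqP; rewrite mulf_eq0 (negbTE (lt0r_neq0 hV)) subr_eq0 => /eqP.
by have [] := Vv _ _ _ _ t Ns Nw t0 t1 ex ey.
Qed.

Lemma exists_min_weight g (a b i0 j0 : nat) : (0 < a)%N -> (0 < b)%N -> g i0 j0 != 0 ->
  exists i j, [/\ g i j != 0, (a * i + b * j <= a * i0 + b * j0)%N,
    (forall i' j', g i' j' != 0 -> (a * i + b * j <= a * i' + b * j')%N) &
    (forall i' j', g i' j' != 0 -> (a * i' + b * j' = a * i + b * j)%N -> (i' <= i)%N)].
Proof.
move=> ha hb hg.
pose P n := [exists i : 'I_n.+1, exists j : 'I_n.+1, (g i j != 0) && (a * i + b * j == n)%N].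
have PP : forall i j, g i j != 0 -> P (a * i + b * j)%N.
  move=> i j hij; apply/existsP.
  have hi : (i < (a * i + b * j).+1)%N by nia.
  have hj : (j < (a * i + b * j).+1)%N by nia.
  exists (Ordinal hi); apply/existsP; exists (Ordinal hj); by rewrite /= hij eqxx.
have exP : exists n, P n by exists (a * i0 + b * j0)%N; exact: PP.
case: (ex_minnP exP) => m Pm minm.
pose Q i := (i <= m)%N && [exists j : 'I_m.+1, (g i j != 0) && (a * i + b * j == m)%N].
have exQ : exists i, Q i.
  move/existsP: Pm => [i /existsP [j /andP [h1 /eqP h2]]].
  exists i; rewrite /Q; apply/andP; split; first by rewrite -ltnS.
  by apply/existsP; exists j; rewrite h1 h2 eqxx.
have ubQ : forall i, Q i -> (i <= m)%N by move=> i /andP [].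
case: (ex_maxnP exQ ubQ) => i Qi maxi.
move/andP: Qi => [_ /existsP [j /andP [hij /eqP ej]]].
exists i, j; split => //.
- by rewrite ej; apply: minm; apply: PP.
- by move=> i' j' h; rewrite ej; apply: minm; apply: PP.
- move=> i' j' h e; apply: maxi; rewrite /Q.
  have hi' : (i' <= m)%N by nia.
  have hj' : (j' < m.+1)%N by nia.
  rewrite hi' /=; apply/existsP; exists (Ordinal hj'); by rewrite /= h e ej eqxx.
Qed.

Lemma natr_weight (a b i j : nat) : ((a * i + b * j)%N%:R : R) = a%:R * i%:R + b%:R * j%:R.
Proof. by rewrite natrD !natrM. Qed.

Lemma min_weight_vertex g (a b i j : nat) : (0 < a)%N -> (0 < b)%N -> g i j != 0 ->
  (forall i' j', g i' j' != 0 -> (a * i + b * j <= a * i' + b * j')%N) ->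
  (forall i' j', g i' j' != 0 -> (a * i' + b * j' = a * i + b * j)%N -> (i' <= i)%N) ->
  vertex g i%:R j%:R.
Proof.
move=> ha hb hg H1 H2.
apply: (@vertex_right_end g a%:R b%:R (a * i + b * j)%N%:R 0 i j).
- by rewrite ltr0n.
- by rewrite ltr0n.
- by move=> i' j' h; rewrite -natr_weight ler_nat; apply: H1.
- move=> i' j' h e; rewrite ler0n ler_nat /=; apply: (H2 _ j') => //.
  by move: e; rewrite -natr_weight => /eqP; rewrite eqr_nat => /eqP.
- exact: hg.
- by rewrite natr_weight.
Qed.

Lemma vertex_natE g (i j : nat) : vertex g i%:R j%:R -> g i j != 0.
Proof.
case/vertex_support => i' [j' [h [/(mulrIn (oner_neq0 R)) ei /(mulrIn (oner_neq0 R)) ej]]].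
by rewrite ei ej.
Qed.

Lemma last_vertex_w_order g (gam d : nat) : last_vertex g gam%:R d%:R -> w_order_ge g d.
Proof.
move=> [V1 Lv] i0 j0 h0; rewrite leqNgt; apply/negP => hlt.
(* a support point of least weight i + (i0 + 1) j is a vertex below (gam, d) *)
have [iS [jS [hs hle hmin hmax]]] := exists_min_weight (ltn0Sn 0) (ltn0Sn i0) h0.
have Vs := min_weight_vertex (ltn0Sn 0) (ltn0Sn i0) hs hmin hmax.
have hisg : (iS <= gam)%N by rewrite -(ler_nat R); exact: Lv _ _ Vs.
have hjs : (jS < d)%N by nia.
apply: (vertex_not_northeast (support_quadrants hs) _ _ _ V1); rewrite ?ler_nat ?ltr_nat; lia.
Qed.

Section LastEdge.
Variables (g : series R) (A B gam d : nat).
Hypotheses (last_gd : last_vertex g gam%:R d%:R) (prev_AB : prev_vertex g A%:R B%:R gam%:R d%:R).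

Let u := (B - d)%N.
Let v := (gam - A)%N.
Let c := (u * gam + v * d)%N.

Lemma last_edge_lt : (A < gam)%N /\ (d < B)%N.
Proof.
have [_ [V0 [ltAg _]]] := prev_AB; move: ltAg; rewrite ltr_nat => ltAg; split => //.
case: (ltnP d B) => // hdB; exfalso.
apply: (vertex_not_northeast (support_quadrants (vertex_natE V0)) _ _ _ (proj1 last_gd));
  rewrite ?ler_nat ?ltr_nat; lia.
Qed.

Let hu : (0 < u)%N. Proof. by rewrite subn_gt0; case: last_edge_lt. Qed.
Let hv : (0 < v)%N. Proof. by rewrite subn_gt0; case: last_edge_lt. Qed.

Let weight_gam : (u * gam + v * d = c)%N := erefl.

Let weight_A : (u * A + v * B = c)%N.
Proof. by have [? ?] := last_edge_lt; rewrite /c /u /v; nia. Qed.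

Let natr_c i j : (u * i + v * j)%N = c -> u%:R * i%:R + v%:R * j%:R = c%:R :> R.
Proof. by rewrite -natr_weight => ->. Qed.

Let weight_gamR : u%:R * gam%:R + v%:R * d%:R = c%:R :> R := natr_c weight_gam.
Let weight_AR : u%:R * A%:R + v%:R * B%:R = c%:R :> R := natr_c weight_A.

Lemma last_edge_weight_ge i j : g i j != 0 -> (c <= u * i + v * j)%N.
Proof.
have [[V1 _] [_ [V0 [_ NB]]]] := (last_gd, prev_AB); have [ltAg _] := last_edge_lt.
move=> h0; rewrite leqNgt; apply/negP => hlt.
(* the rightmost support point of least weight is a vertex, and lies neither left of A, nor right
   of gam (the other vertex would then lie above a chord), nor strictly in between *)
have [iS [jS [hs hle hmin hmax]]] := exists_min_weight hu hv h0.
have Vs := min_weight_vertex hu hv hs hmin hmax.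
have ePs : u%:R * iS%:R + v%:R * jS%:R < c%:R :> R by rewrite -natr_weight ltr_nat; lia.
have hV : (0 : R) < v%:R by rewrite ltr0n.
have h2 : A%:R < gam%:R :> R by rewrite ltr_nat.
have QS := support_quadrants hs.
have QA := support_quadrants (vertex_natE V0); have QG := support_quadrants (vertex_natE V1).
case: (leqP iS A) => hisA.
  have h1 : iS%:R <= A%:R :> R by rewrite ler_nat.
  apply: (@vertex_not_above_segment g u%:R v%:R c%:R iS%:R jS%:R gam%:R d%:R A%:R B%:R
    ((gam%:R - A%:R) / (gam%:R - iS%:R)) QS QG _ _ hV _ ePs weight_gamR weight_AR V0).
  - by apply: divr_gt0; lra.
  - by rewrite ler_pdivrMr; lra.
  - by field; lra.
case: (leqP gam iS) => hgis; last by apply: (NB _ _ Vs); rewrite !ltr_nat.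
have h1 : gam%:R <= iS%:R :> R by rewrite ler_nat.
apply: (@vertex_not_above_segment g u%:R v%:R c%:R iS%:R jS%:R A%:R B%:R gam%:R d%:R
  ((gam%:R - A%:R) / (iS%:R - A%:R)) QS QA _ _ hV _ ePs weight_AR weight_gamR V1).
- by apply: divr_gt0; lra.
- by rewrite ler_pdivrMr; lra.
- by field; lra.
Qed.

Lemma last_edge_on_line i j : g i j != 0 -> (u * i + v * j)%N = c -> (A <= i)%N /\ (i <= gam)%N.
Proof.
have [[V1 _] [_ [V0 _]]] := (last_gd, prev_AB); have [ltAg _] := last_edge_lt.
move=> h /natr_c ePs.
have hV : (0 : R) < v%:R by rewrite ltr0n.
have h2 : A%:R < gam%:R :> R by rewrite ltr_nat.
have Ns := quadrants_newton (support_quadrants h).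
have NA := quadrants_newton (support_quadrants (vertex_natE V0)).
have NG := quadrants_newton (support_quadrants (vertex_natE V1)).
case: (ltnP i A) => hiA.
  exfalso; have h1 : i%:R < A%:R :> R by rewrite ltr_nat.
  have := @vertex_on_segment g u%:R v%:R c%:R i%:R j%:R gam%:R d%:R A%:R B%:R
    ((gam%:R - A%:R) / (gam%:R - i%:R)) Ns NG.
  move=> /(_ _ _ hV _ ePs weight_gamR weight_AR V0) H.
  suff : i%:R = A%:R :> R by lra.
  apply: H.
  - by apply: divr_gt0; lra.
  - by rewrite ltr_pdivrMr; lra.
  - by field; lra.
case: (leqP i gam) => hig; [by split | exfalso].
have h1 : gam%:R < i%:R :> R by rewrite ltr_nat.
have := @vertex_on_segment g u%:R v%:R c%:R i%:R j%:R A%:R B%:R gam%:R d%:R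
  ((gam%:R - A%:R) / (i%:R - A%:R)) Ns NA.
move=> /(_ _ _ hV _ ePs weight_AR weight_gamR V1) H.
suff : i%:R = gam%:R :> R by lra.
apply: H.
- by apply: divr_gt0; lra.
- by rewrite ltr_pdivrMr; lra.
- by field; lra.
Qed.

Lemma last_edge_face : face u v g c A B gam d.
Proof.
split; [exact: last_edge_weight_ge | exact: last_edge_on_line | by [] | | ].
- exact: vertex_natE (proj1 (proj2 prev_AB)).
- exact: vertex_natE (proj1 last_gd).
Qed.

End LastEdge.

End NewtonPolygon.

Lemma face_liftz (R : realType) (p : nat -> R[i]) (u v del : nat) : (0 < u)%N ->
  (forall k, (k < del)%N -> p k = 0) -> p del != 0 -> face u v (liftz p) (u * del) del 0 del 0.
Proof.
move=> hu hp0 hpd; split; rewrite ?muln0 ?addn0 /liftz ?eqxx //.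
- move=> i j; have [->|_] := eqVneq j 0%N; last by rewrite eqxx.
  rewrite muln0 addn0 leq_mul2l => hi; apply/orP; right.
  by rewrite leqNgt; apply/negP => /hp0; apply/eqP.
- move=> i j; have [->|_] := eqVneq j 0%N; last by rewrite eqxx.
  by move=> _ /eqP; rewrite muln0 addn0 eqn_pmul2l // => /eqP ->.
Qed.

Lemma face_lt (R : realType) (G : series R) (u v M x0 y0 x1 y1 : nat) : (0 < u)%N -> (0 < v)%N ->
  face u v G M x0 y0 x1 y1 -> (y1 < y0)%N -> (x0 < x1)%N.
Proof.
move=> hu hv [_ _ [E0 E1] _ _]; rewrite -(ltn_pmul2l hu) -(ltn_pmul2l hv); nia.
Qed.

Lemma prev_vertex_of_face (R : realType) (G : series R) (u v M x0 y0 x1 y1 : nat) :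
  (0 < u)%N -> (0 < v)%N -> face u v G M x0 y0 x1 y1 -> (y1 < y0)%N ->
  [/\ prev_vertex G x0%:R y0%:R x1%:R y1%:R,
      (y1%:R - y0%:R) / (x1%:R - x0%:R) = - (v%:R / u%:R)^-1 :> R &
      intercept (x1%:R : R) y1%:R x0%:R y0%:R = M%:R / v%:R].
Proof.
move=> hu hv FG hy; have hx := face_lt hu hv FG hy; move: FG => [G1 G2 [G3 G4] G5 G6].
have hU : (0 : R) < u%:R by rewrite ltr0n.
have hV : (0 : R) < v%:R by rewrite ltr0n.
have hX : (x0%:R : R) < x1%:R by rewrite ltr_nat.
have E0 : u%:R * x0%:R + v%:R * y0%:R = M%:R :> R by rewrite -natr_weight G3.
have E1 : u%:R * x1%:R + v%:R * y1%:R = M%:R :> R by rewrite -natr_weight G4.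
clear G3 G4.
have ey1 : (y1%:R : R) = (M%:R - u%:R * x1%:R) / v%:R by rewrite -E1; field; lra.
have ey0 : (y0%:R : R) = (M%:R - u%:R * x0%:R) / v%:R by rewrite -E0; field; lra.
split.
- apply: (@prev_vertex_of_supporting_line R G u%:R v%:R M%:R x0 y0 x1 y1) => //.
  + by move=> i j h; rewrite -natr_weight ler_nat; apply: G1.
  + move=> i j h; rewrite -natr_weight => /(mulrIn (oner_neq0 R)) e.
    by have [a b] := G2 _ _ h e; rewrite !ler_nat a b.
- by rewrite ey1 ey0 invf_div; field; lra.
- by rewrite /intercept ey1 ey0; field; lra.
Qed.

Lemma gamma_n_dominant u v gam del d : (0 < del)%N -> (del * v < u * gam + v * d)%N ->
  forall n, (v * del ^ n.+1 < u * gamma_n gam del d n.+1 + v * d ^ n.+1)%N.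
Proof.
move=> hdel hK; elim=> [|n IH].
  by rewrite gamma_nS /gamma_n big_ord0 muln0 expn0 !expn1 muln1 mulnC; lia.
rewrite gamma_nS (expnS del n.+1) (expnS d n.+1).
set g := gamma_n gam del d n.+1 in IH *; set e := (d ^ n.+1)%N in IH *.
set f := (del ^ n.+1)%N in IH *.
have h1 : (del * (v * f) < del * (u * g + v * e))%N by rewrite ltn_pmul2l.
have h2 : (del * v * e <= (u * gam + v * d) * e)%N by rewrite leq_mul2r ltnW ?orbT.
nia.
Qed.

Lemma gamma_n_balanced u v gam del d : (del * v = u * gam + v * d)%N ->
  forall n, (v * del ^ n = u * gamma_n gam del d n + v * d ^ n)%N.
Proof.
move=> hK; elim=> [|n IH]; first by rewrite /gamma_n big_ord0 !muln0 !expn0 add0n.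
rewrite gamma_nS !expnS.
have : (del * (v * del ^ n) = del * (u * gamma_n gam del d n + v * d ^ n))%N by rewrite IH.
nia.
Qed.

Section Iterates.
Variables (R : realType) (p : nat -> R[i]) (q : series R) (delta gamma d A B : nat).
Hypotheses (hdel : (1 <= delta)%N) (hp0 : forall k, (k < delta)%N -> p k = 0) (hpd : p delta != 0).
Hypotheses (last_gd : last_vertex q gamma%:R d%:R)
  (prev_AB : prev_vertex q A%:R B%:R gamma%:R d%:R).
Hypothesis hd : (0 < d)%N.

Let u := (B - d)%N.
Let v := (gamma - A)%N.
Let c := (u * gamma + v * d)%N.

Let ltAg : (A < gamma)%N := proj1 (last_edge_lt last_gd prev_AB).
Let ltdB : (d < B)%N := proj2 (last_edge_lt last_gd prev_AB).
Let hu : (0 < u)%N. Proof. by rewrite subn_gt0. Qed.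
Let hv : (0 < v)%N. Proof. by rewrite subn_gt0. Qed.
Let hgam : gamma = (A + v)%N. Proof. by rewrite subnKC // ltnW. Qed.
Let hB : B = (d + u)%N. Proof. by rewrite subnKC // ltnW. Qed.

Let face_q : face u v q c A B gamma d := last_edge_face last_gd prev_AB.
Let face_p : face u v (liftz p) (u * delta) delta 0 delta 0 := face_liftz v hu hp0 hpd.

Let l1E : (gamma%:R - A%:R) / (B%:R - d%:R) = v%:R / u%:R :> R.
Proof. by rewrite -!natrB // ltnW. Qed.

Let interceptE : intercept (gamma%:R : R) d%:R A%:R B%:R = c%:R / v%:R.
Proof.
have nV : v%:R != 0 :> R by rewrite pnatr_eq0 -lt0n.
rewrite /intercept /c natrD !natrM hB hgam !natrD.
field; rewrite nV /=.
have -> : (A%:R - (A%:R + v%:R) : R) = - v%:R by ring.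
by rewrite oppr_eq0.
Qed.

Lemma Qiter_prev_vertex_dominant :
  delta%:R < intercept (gamma%:R : R) d%:R A%:R B%:R ->
  forall n : nat, (1 <= n)%N ->
    let gn := gamma_n gamma delta d n in
    let An := (gn - (gamma - A) * d ^ n.-1)%N in
    let Bn := (B * d ^ n.-1)%N in
    prev_vertex (Qiter p q n) An%:R Bn%:R gn%:R (d ^ n)%:R /\
    ((d ^ n)%:R - Bn%:R) / (gn%:R - An%:R) = - ((gamma%:R - A%:R) / (B%:R - d%:R))^-1 :> R /\
    (delta ^ n)%:R < intercept (gn%:R : R) (d ^ n)%:R An%:R Bn%:R.
Proof.
rewrite interceptE ltr_pdivlMr ?ltr0n // -natrM ltr_nat => hK [//|n] _ gn An Bn.
have [F _] := Qiter_face_dominant hu hv hdel hd hgam hB face_q (last_vertex_w_order last_gd)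
  face_p n hK.
have -> : An = (delta * gamma_n gamma delta d n + A * d ^ n)%N.
  by rewrite /An /gn gamma_nS /= hgam; nia.
have hy : (d ^ n.+1 < B * d ^ n)%N by rewrite expnS ltn_pmul2r ?expn_gt0 ?hd ?ltdB.
have [P1 P2 P3] := prev_vertex_of_face hu hv F hy.
split; first exact: P1.
split; first by rewrite P2 l1E.
rewrite P3 ltr_pdivlMr ?ltr0n // -natrM ltr_nat mulnC.
exact: gamma_n_dominant.
Qed.

Lemma Qiter_prev_vertex_balanced :
  delta%:R = intercept (gamma%:R : R) d%:R A%:R B%:R ->
  forall n : nat, (1 <= n)%N ->
    let gn := gamma_n gamma delta d n in
    let An := Astar_n A B delta n in
    let Bn := (B ^ n)%N in
    prev_vertex (Qiter p q n) An%:R Bn%:R gn%:R (d ^ n)%:R /\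
    ((d ^ n)%:R - Bn%:R) / (gn%:R - An%:R) = - ((gamma%:R - A%:R) / (B%:R - d%:R))^-1 :> R /\
    (delta ^ n)%:R = intercept (gn%:R : R) (d ^ n)%:R An%:R Bn%:R.
Proof.
rewrite interceptE => /(congr1 (fun x => x * v%:R)).
rewrite divfK ?pnatr_eq0 -?lt0n // -natrM => /(mulrIn (oner_neq0 R)) hK [//|n] _ gn An Bn.
have F := Qiter_face_balanced hu hv hdel hd hgam hB face_q face_p n.+1 hK.
have hy : (d ^ n.+1 < B ^ n.+1)%N by rewrite ltn_exp2r ?ltdB.
have [P1 P2 P3] := prev_vertex_of_face hu hv F hy.
split; first exact: P1.
split; first by rewrite P2 l1E.
by rewrite P3 -(gamma_n_balanced hK) natrM mulrC mulKf // pnatr_eq0 -lt0n.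
Qed.

End Iterates.

Theorem proposition3 (R : realType) (p : nat -> R[i]) (q : series R)
  (delta : nat) (gamma d A B : nat) :
  (1 <= delta)%N ->
  (forall k, (k < delta)%N -> p k = 0) -> p delta != 0 ->
  convergent1 p ->
  q 0%N 0%N = 0 -> (exists i j, q i j != 0) ->
  convergent2 q ->
  (* (gamma,d) = (n_s,m_s) is the last vertex, (A,B) = (n_{s-1},m_{s-1}) the one before it *)
  last_vertex q gamma%:R d%:R ->
  prev_vertex q A%:R B%:R gamma%:R d%:R ->
  (* Case 2: delta <= T_{s-1} *)
  (delta%:R <= intercept (gamma%:R : R) d%:R A%:R B%:R) ->
  (0 < d)%N ->
  (* l_1 = (n_s - n_{s-1}) / (m_{s-1} - m_s) *)
  let l1 : R := (gamma%:R - A%:R) / (B%:R - d%:R) in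
  ((delta%:R < intercept (gamma%:R : R) d%:R A%:R B%:R) ->
    forall n : nat, (1 <= n)%N ->
      let gn := gamma_n gamma delta d n in
      let An := (gn - (gamma - A) * d ^ n.-1)%N in
      let Bn := (B * d ^ n.-1)%N in
      prev_vertex (Qiter p q n) An%:R Bn%:R gn%:R (d ^ n)%:R /\
      ((d ^ n)%:R - Bn%:R) / (gn%:R - An%:R) = - l1^-1 /\
      (delta ^ n)%:R < intercept (gn%:R : R) (d ^ n)%:R An%:R Bn%:R) /\
  ((delta%:R = intercept (gamma%:R : R) d%:R A%:R B%:R) ->
    forall n : nat, (1 <= n)%N ->
      let gn := gamma_n gamma delta d n in
      let An := Astar_n A B delta n in
      let Bn := (B ^ n)%N in
      prev_vertex (Qiter p q n) An%:R Bn%:R gn%:R (d ^ n)%:R /\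
      ((d ^ n)%:R - Bn%:R) / (gn%:R - An%:R) = - l1^-1 /\
      (delta ^ n)%:R = intercept (gn%:R : R) (d ^ n)%:R An%:R Bn%:R).
Proof.
(* Only the formal power series matter: convergence, q(0,0) = 0 and the Case 2 bound
   (implied by each branch) are not used. *)
move=> hdel hp0 hpd _ _ _ _ last_gd prev_AB _ hd l1; split.
- exact: Qiter_prev_vertex_dominant.
- exact: Qiter_prev_vertex_balanced.
Qed.
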